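(* Let $G^\sigma$ be a lower-optimal oriented graph and let $x$ be a vertex lying on a cycle of $G$. Then (i) $sr(G^\sigma)=sr(G^\sigma-x)$; (ii) $\alpha(G)=\alpha(G-x)$; (iii) $d(G)=d(G-x)+1$; (iv) $G^\sigma-x$ is lower-optimal; (v) $x$ lies on exactly one cycle of $G$, and $x$ is not a quasi-pendant vertex of $G$.
   Context: An oriented graph $G^\sigma$ is obtained from a simple graph $G$ by assigning a direction to each edge. Its skew-adjacency matrix $S(G^\sigma)=[s_{x,y}]$ has $s_{x,y}=1$ if there is an arc from $x$ to $y$, $s_{x,y}=-1$ if there is an arc from $y$ to $x$, and $0$ otherwise; $sr(G^\sigma)$ is the rank of $S(G^\sigma)$. $\alpha(G)$ is the independence number. $d(G)=|E_G|-|V_G|+\omega(G)$, with $\omega(G)$ the number of components. For every oriented graph one has $sr(G^\sigma)+2\alpha(G)\geqslant 2|V_G|-2d(G)$, and $G^\sigma$ is called lower-optimal if equality holds. $G^\sigma-x$ is obtained by deleting $x$ and its incident arcs. A pendant vertex has degree one; a quasi-pendant vertex is a vertex adjacent to a pendant vertex. *)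

From HB Require Import structures.
From mathcomp Require Import all_boot all_order all_algebra.
Set Implicit Arguments. Unset Strict Implicit. Unset Printing Implicit Defensive.
Import Order.TTheory GRing.Theory Num.Theory.

(* An oriented graph G^sigma is given by a finite ambient type T, a vertex
   set V : {set T}, and an arc relation [a] on T (a u v = arc from u to v).
   Only arcs between vertices of V are part of G^sigma.  G^sigma - x is the
   oriented graph with vertex set V :\ x and the same arc relation. *)

Definition oriented (T : finType) (a : rel T) : Prop :=
  (forall u, ~~ a u u) /\ (forall u v, ~~ (a u v && a v u)).

Definition adj (T : finType) (V : {set T}) (a : rel T) : rel T :=
  fun u v => [&& u \in V, v \in V & a u v || a v u].

Definition skew_entry (T : finType) (a : rel T) (u v : T) : rat :=
  (a u v)%:R - (a v u)%:R.

Definition skew_adj (T : finType) (V : {set T}) (a : rel T) : 'M[rat]_#|V| :=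
  \matrix_(i, j) skew_entry a (enum_val i) (enum_val j).

Definition sr (T : finType) (V : {set T}) (a : rel T) : nat :=
  \rank (skew_adj V a).

Definition independent (T : finType) (V : {set T}) (a : rel T) (I : {set T}) :=
  (I \subset V) && [forall u in I, forall v in I, ~~ adj V a u v].

Definition alpha (T : finType) (V : {set T}) (a : rel T) : nat :=
  \max_(I : {set T} | independent V a I) #|I|.

Definition edges (T : finType) (V : {set T}) (a : rel T) : {set {set T}} :=
  [set E : {set T} | [exists u, exists v, (E == [set u; v]) && adj V a u v]].

Definition ncomp (T : finType) (V : {set T}) (a : rel T) : nat :=
  n_comp (adj V a) (mem V).

Definition dim_cyc (T : finType) (V : {set T}) (a : rel T) : int :=
  (#|edges V a|%:Z - #|V|%:Z + (ncomp V a)%:Z)%R.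

Definition lower_optimal (T : finType) (V : {set T}) (a : rel T) : Prop :=
  ((sr V a)%:Z + 2 * (alpha V a)%:Z = 2 * #|V|%:Z - 2 * dim_cyc V a)%R.

Definition is_cycle (T : finType) (V : {set T}) (a : rel T) (p : seq T) : bool :=
  [&& uniq p, 3 <= size p & cycle (adj V a) p].

(* the edge set of the cycle p (identifies the cycle as a subgraph) *)
Definition cycle_edges (T : finType) (p : seq T) : {set {set T}} :=
  [set [set u; next p u] | u in p].

Definition on_cycle (T : finType) (V : {set T}) (a : rel T) (x : T) : Prop :=
  exists p, is_cycle V a p /\ x \in p.

Definition on_unique_cycle (T : finType) (V : {set T}) (a : rel T) (x : T) : Prop :=
  on_cycle V a x /\
  forall p q, is_cycle V a p -> x \in p -> is_cycle V a q -> x \in q ->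
    cycle_edges p = cycle_edges q.

Definition degree (T : finType) (V : {set T}) (a : rel T) (u : T) : nat :=
  #|[set v | adj V a u v]|.

Definition pendant (T : finType) (V : {set T}) (a : rel T) (u : T) : bool :=
  (u \in V) && (degree V a u == 1%N).

Definition quasi_pendant (T : finType) (V : {set T}) (a : rel T) (x : T) : bool :=
  (x \in V) && [exists y, adj V a x y && pendant V a y].

(* Every oriented graph satisfies sr + 2 alpha >= 2|V| - 2d, by induction on |V|.
   Deleting v lowers d by deg v minus the number of components of G - v that
   meet N(v), so d drops when two neighbours of v are joined in G - v; if no
   vertex is of that kind, G is a forest and has an isolated vertex (deleting
   it lowers alpha) or a pendant vertex y at x (deleting both lowers sr by 2,
   the entries s_xy and s_yx being pivots, and alpha by 1).
   If x lies on a cycle, d(G - x) < d(G) while sr, alpha and |V| drop by at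
   most 0, 0 and 1, so lower-optimality forces equality everywhere.  A second
   cycle through x would give a vertex z on both cycles whose deletion lowers d
   by 2, and a pendant neighbour y of x would make G - x - y violate the lower
   bound. *)

From mathcomp Require Import all_boot all_order all_algebra.
From mathcomp Require Import zify.
Set Implicit Arguments. Unset Strict Implicit. Unset Printing Implicit Defensive.
Import GRing.Theory.

Section Pivot.
Variable F : fieldType.
Local Open Scope ring_scope.

Lemma mxrank_mxsub m n m' n' (f : 'I_m' -> 'I_m) (g : 'I_n' -> 'I_n)
    (A : 'M[F]_(m, n)) :
  (\rank (mxsub f g A) <= \rank A)%N.
Proof.
have -> : mxsub f g A = rowsub f 1%:M *m A *m colsub g 1%:M.
  by rewrite -mulmxA mul_rowsub_mx mul1mx mulmx_colsub mulmx1; apply/matrixP=> i j; rewrite !mxE.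
by rewrite (leq_trans (mxrankM_maxl _ _)) // mxrankM_maxr.
Qed.

Lemma mxrank_pivot_row m n (A : 'M[F]_(m, n)) (B : 'M_(m, 1)) (s : F) :
  s != 0 -> (\rank A < \rank (block_mx A B 0 s%:M))%N.
Proof.
move=> s0; pose L := block_mx 1%:M (- s^-1 *: B) 0 (1%:M : 'M_1).
have elim_B : L *m block_mx A B 0 s%:M = block_mx A 0 0 s%:M.
  rewrite mulmx_block !mul1mx !mul0mx !mulmx0 !addr0 add0r scaleNr mulNmx.
  by rewrite -scalemxAl mul_mx_scalar scalerA mulVf // scale1r subrr.
have s_nz : s%:M != 0 :> 'M_1.
  by apply: contra s0 => /eqP/matrixP/(_ 0 0)/eqP; rewrite !mxE eqxx mulr1n.
have := mxrankM_maxr L (block_mx A B 0 s%:M).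
by rewrite elim_B rank_diag_block_mx rank_rV s_nz [(\rank A + _)%N]addn1.
Qed.

Lemma mxrank_pivot_col m n (A : 'M[F]_(m, n)) (C : 'M_(1, n)) (s : F) :
  s != 0 -> (\rank A < \rank (block_mx A 0 C s%:M))%N.
Proof.
move=> s0; rewrite -(mxrank_tr A) -[\rank (block_mx _ _ _ _)]mxrank_tr.
by rewrite tr_block_mx trmx0 tr_scalar_mx; apply: mxrank_pivot_row.
Qed.

End Pivot.

Definition snoc (T : Type) m (f : 'I_m -> T) (v : T) (i : 'I_(m + 1)) : T :=
  if split i is inl k then f k else v.

Lemma cardsD1_mem (T : finType) (A : {set T}) x : x \in A -> #|A| = #|A :\ x| + 1.
Proof. by move=> xA; rewrite (cardsD1 x) xA addnC. Qed.

Lemma card_imset_setD_le (aT rT : finType) (f : aT -> rT) (N D : {set aT}) :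
  D \subset N -> {in D, forall w, exists2 w', w' \in N :\: D & f w = f w'} ->
  #|f @: N| + #|D| <= #|N|.
Proof.
move=> DN fD; rewrite -(cardsID D N) (setIidPr DN) addnC leq_add2l.
apply: leq_trans (leq_imset_card f _); apply/subset_leq_card/subsetP=> _ /imsetP[w wN ->].
have [/fD[w' w'ND ->]|wD] := boolP (w \in D); first exact: imset_f.
by apply: imset_f; rewrite inE wD.
Qed.

Lemma mem_cycle_edges (T : finType) (p : seq T) E w :
  E \in cycle_edges p -> w \in E -> w \in p.
Proof. by case/imsetP=> u up -> /set2P[]->; rewrite ?mem_next. Qed.

Lemma cycle_edges_sub (T : finType) (p q : seq T) x : uniq q -> x \in p -> x \in q ->
  {in q, forall z, z \in p -> [set z; next q z] \in cycle_edges p} ->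
  cycle_edges q \subset cycle_edges p.
Proof.
move=> uq xp xq q_edges; have q_orbit := fconnect_cycle (cycle_next uq) xq.
have qp : {subset q <= p}.
  move=> y; rewrite -q_orbit => /iter_findex <-; elim: (findex _ x y) => //= n IHn.
  have zq : iter n (next q) x \in q by rewrite -q_orbit fconnect_iter.
  by apply: mem_cycle_edges (q_edges _ zq IHn) _; rewrite !inE eqxx orbT.
by apply/subsetP=> _ /imsetP[z zq ->]; apply: q_edges (qp z zq).
Qed.

Section OrientedGraph.
Variables (T : finType) (a : rel T).
Hypothesis a_oriented : oriented a.
Implicit Types S I : {set T}.

Definition skew_mx m n (r : 'I_m -> T) (c : 'I_n -> T) : 'M[rat]_(m, n) :=
  \matrix_(i, j) skew_entry a (r i) (c j).

Lemma skew_mx_snoc m n (r : 'I_m -> T) (c : 'I_n -> T) u v :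
  skew_mx (snoc r u) (snoc c v) =
  block_mx (skew_mx r c) (\col_i skew_entry a (r i) v)
           (\row_j skew_entry a u (c j)) (skew_entry a u v)%:M.
Proof.
apply/matrixP=> i j; rewrite -(splitK i) -(splitK j) !mxE /snoc !unsplitK.
by case: (split i) => i'; case: (split j) => j';
  rewrite /= ?row_mxEl ?row_mxEr !mxE ?ord1 ?eqxx.
Qed.

Lemma mxrank_skew_mx_le S m n (r : 'I_m -> T) (c : 'I_n -> T) :
  (forall i, r i \in S) -> (forall j, c j \in S) -> \rank (skew_mx r c) <= sr S a.
Proof.
case: m r => [|m] r rS cS; first by rewrite (leq_trans (rank_leq_row _)).
pose h x := enum_rank_in (rS ord0) x.
have -> : skew_mx r c = mxsub (h \o r) (h \o c) (skew_adj S a).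
  by apply/matrixP=> i j; rewrite !mxE /h /= !enum_rankK_in.
exact: mxrank_mxsub.
Qed.

Lemma adj_irr S u : ~~ adj S a u u.
Proof. by rewrite /adj orbb (negbTE (a_oriented.1 u)) !andbF. Qed.

Lemma adj_sym S : symmetric (adj S a).
Proof. by move=> u v; rewrite /adj andbCA orbC. Qed.

Lemma skew_entry_adj S u v :
  u \in S -> v \in S -> (skew_entry a u v != 0%R) = adj S a u v.
Proof.
move=> uS vS; rewrite /adj uS vS /skew_entry; have := a_oriented.2 u v.
by case: (a u v); case: (a v u).
Qed.

Lemma skew_entry_eq0 S u v :
  u \in S -> v \in S -> ~~ adj S a u v -> skew_entry a u v = 0%R.
Proof. by move=> uS vS; rewrite -(skew_entry_adj uS vS) negbK => /eqP. Qed.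

Lemma sr_sub S' S : S' \subset S -> sr S' a <= sr S a.
Proof.
by move=> sS'S; apply: mxrank_skew_mx_le => i; apply/(subsetP sS'S)/enum_valP.
Qed.

Lemma sr_pendant S x y :
  adj S a x y -> (forall w, adj S a y w -> w = x) -> sr (S :\ x :\ y) a + 2 <= sr S a.
Proof.
move=> xy y_pendant; have /and3P[xS yS _] := xy.
set e : 'I_#|S :\ x :\ y| -> T := enum_val.
have eP i : [/\ e i != y, e i != x & e i \in S].
  by have := enum_valP i; rewrite !inE => /and3P[].
have nadj_y w : w != x -> ~~ adj S a y w by apply: contra => /y_pendant ->.
have col_y0 : (\col_i skew_entry a (e i) y = 0)%R.
  apply/matrixP=> i j; have [_ ? ?] := eP i.
  by rewrite !mxE (skew_entry_eq0 _ yS) // adj_sym nadj_y.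
have s_xy : skew_entry a x y != 0%R by rewrite (skew_entry_adj xS yS).
have s_yx : skew_entry a y x != 0%R by rewrite (skew_entry_adj yS xS) adj_sym.
(* Rows ordered (S - x - y, x, y), columns (S - x - y, y, x): row y and then
   column y carry a single nonzero entry, in the bottom-right corner. *)
have step_x : (sr (S :\ x :\ y) a < \rank (skew_mx (snoc e x) (snoc e y)))%N.
  by rewrite skew_mx_snoc col_y0; apply: mxrank_pivot_col.
have step_y : (\rank (skew_mx (snoc e x) (snoc e y))
               < \rank (skew_mx (snoc (snoc e x) y) (snoc (snoc e y) x)))%N.
  rewrite [X in (_ < \rank X)%N]skew_mx_snoc (_ : \row_j _ = 0)%R; first exact: mxrank_pivot_row.
  apply/matrixP=> i j; rewrite !mxE /snoc; case: (split j) => [k|_].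
    by have [_ ? ?] := eP k; rewrite (skew_entry_eq0 yS) ?nadj_y.
  by rewrite (skew_entry_eq0 yS yS) ?adj_irr.
have inS m (f : 'I_m -> T) v : (forall i, f i \in S) -> v \in S -> forall i, snoc f v i \in S.
  by move=> fS vS i; rewrite /snoc; case: (split i).
have eS i : e i \in S by have [] := eP i.
have := mxrank_skew_mx_le (inS _ _ _ (inS _ _ _ eS xS) yS) (inS _ _ _ (inS _ _ _ eS yS) xS).
lia.
Qed.

Lemma independentP S I :
  reflect (I \subset S /\ {in I &, forall u v, ~~ adj S a u v}) (independent S a I).
Proof.
apply: (iffP andP) => [[IS /forallP indI]|[IS indI]]; split=> //.
  by move=> u v uI vI; move/implyP/(_ uI)/forallP/(_ v)/implyP/(_ vI): (indI u).
by apply/forallP=> u; apply/implyP=> uI; apply/forallP=> v; apply/implyP; apply: indI.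
Qed.

Lemma adj_sub S' S u v : S' \subset S -> u \in S' -> v \in S' -> adj S a u v = adj S' a u v.
Proof. by move=> sS'S uS' vS'; rewrite /adj uS' vS' !(subsetP sS'S). Qed.

Lemma independent_sub S' S I : S' \subset S -> independent S' a I -> independent S a I.
Proof.
move=> sS'S /independentP[IS' indI]; apply/independentP; split; first exact: subset_trans sS'S.
by move=> u v uI vI; rewrite (adj_sub sS'S) ?(subsetP IS') ?indI.
Qed.

Lemma alpha_max S I : independent S a I -> #|I| <= alpha S a.
Proof. exact: leq_bigmax_cond. Qed.

Lemma alphaP S : exists2 I, independent S a I & #|I| = alpha S a.
Proof.
have ind0 : independent S a set0 by apply/independentP; split=> [|u]; rewrite ?sub0set ?inE.
by rewrite /alpha (bigop.bigmax_eq_arg set0 ind0); case: arg_maxnP => // I; exists I.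
Qed.

Lemma alpha_sub S' S : S' \subset S -> alpha S' a <= alpha S a.
Proof. by move=> sS'S; apply/bigmax_leqP => I /(independent_sub sS'S)/alpha_max. Qed.

Lemma alpha_add S' S y : S' \subset S -> y \in S :\: S' ->
  {in S', forall w, ~~ adj S a y w} -> alpha S' a < alpha S a.
Proof.
move=> sS'S /setDP[yS yS'] y_isolated; have [I /independentP[IS' indI] <-] := alphaP S'.
have yI : y \notin I by apply: contra yS'; apply: (subsetP IS').
suff: independent S a (y |: I) by move/alpha_max; rewrite cardsU1 yI add1n.
apply/independentP; split.
  by rewrite subUset sub1set yS (subset_trans IS' sS'S).
move=> u v; rewrite !inE => /predU1P[->|uI] /predU1P[->|vI].
- exact: adj_irr.
- exact/y_isolated/(subsetP IS').
- by rewrite adj_sym; apply/y_isolated/(subsetP IS').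
- by rewrite (adj_sub sS'S) ?(subsetP IS') ?indI.
Qed.

Lemma adj_connect_sym S : connect_sym (adj S a).
Proof. exact/sym_connect_sym/adj_sym. Qed.

Lemma adj_subrel S' S : S' \subset S -> subrel (adj S' a) (adj S a).
Proof. by move=> sS'S u v /and3P[uS' vS' uv]; rewrite /adj !(subsetP sS'S). Qed.

Lemma connect_mem S u w : connect (adj S a) u w -> u \in S -> w \in S.
Proof.
case/connectP=> p; elim: p u => [|z p IHp] u /=; first by move=> _ ->.
by case/andP=> /and3P[_ zS _] zp wp _; apply: IHp zp wp zS.
Qed.

Lemma path_setD1 S v x p : path (adj S a) x p -> v \notin x :: p -> path (adj (S :\ v) a) x p.
Proof.
move=> xp vNp; have allv : all (predC1 v) (x :: p).
  by apply/allP=> w wp /=; apply: contraNneq vNp => <-.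
apply: sub_in_path allv xp => u w; rewrite !inE => uv wv /and3P[uS wS uw].
by rewrite /adj !inE uv wv uS wS.
Qed.

Lemma connect_setD1 S v s t :
  connect (adj S a) s t -> ~~ connect (adj S a) s v -> connect (adj (S :\ v) a) s t.
Proof.
case/connectP=> p sp -> sNv; apply/connectP; exists p => //; apply: path_setD1 => //.
by apply: contra sNv; apply: path_connect.
Qed.

Lemma connect_last_step S v r : connect (adj S a) r v -> r != v ->
  exists2 u, adj S a v u & connect (adj (S :\ v) a) r u.
Proof.
case/connectP=> p; elim: p r => [|z p IHp] r /=; first by move=> _ ->; rewrite eqxx.
case/andP=> rz zp vp rv; have [zv|zv] := eqVneq z v.
  by exists r; [rewrite adj_sym -zv | apply: connect0].
have [u vu zu] := IHp z zp vp zv; exists u => //; apply: connect_trans zu; apply: connect1.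
by move: rz => /and3P[rS zS rz]; rewrite /adj !inE rv zv rS zS.
Qed.

Definition comp_roots S := [set r in S | roots (adj S a) r].

Lemma ncompE S : ncomp S a = #|comp_roots S|.
Proof. by apply: eq_card => r; rewrite !inE andbC. Qed.

Lemma root_adj_mem S u : u \in S -> fingraph.root (adj S a) u \in S.
Proof. exact: connect_mem (connect_root _ u). Qed.

Definition nbr S v := [set u | adj S a v u].

Definition nbr_comps S v := fingraph.root (adj (S :\ v) a) @: nbr S v.

Definition linked_to S v := [set r | connect (adj S a) r v].

Lemma linked_roots_sub S v :
  comp_roots (S :\ v) :&: linked_to S v \subset nbr_comps S v.
Proof.
apply/subsetP=> r; rewrite !inE => /andP[/andP[/andP[rv _] r_root] r_v].
have [u vu ru] := connect_last_step r_v rv.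
apply/imsetP; exists u; first by rewrite inE.
by rewrite -(eqP r_root); apply/(fingraph.rootP (adj_connect_sym _)).
Qed.

Lemma unlinked_roots_lt S v : v \in S ->
  #|comp_roots (S :\ v) :\: linked_to S v| < #|comp_roots S|.
Proof.
move=> vS; set R := _ :\: _; set rootS := fingraph.root (adj S a).
have rootS_inj : {in R &, injective rootS}.
  move=> r1 r2; rewrite !inE => /andP[r1_v /andP[/andP[_ r1S] r1_root]].
  move=> /andP[_ /andP[_ r2_root]] /(fingraph.rootP (adj_connect_sym S)) r12.
  rewrite -(eqP r1_root) -(eqP r2_root); apply/(fingraph.rootP (adj_connect_sym _)).
  exact: connect_setD1 r12 r1_v.
have rootS_sub : rootS @: R \subset comp_roots S :\ rootS v.
  apply/subsetP=> _ /imsetP[r + ->]; rewrite !inE => /andP[r_v /andP[/andP[_ rS] _]].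
  rewrite root_adj_mem // roots_root ?andbT; last exact: adj_connect_sym.
  by apply: contra r_v => /eqP/(fingraph.rootP (adj_connect_sym S)).
rewrite -(card_in_imset rootS_inj) (leq_ltn_trans (subset_leq_card rootS_sub)) //.
rewrite [X in _ < X](cardsD1 (rootS v)) inE root_adj_mem // roots_root //.
exact: adj_connect_sym.
Qed.

Lemma ncomp_del S v : v \in S -> ncomp (S :\ v) a < ncomp S a + #|nbr_comps S v|.
Proof.
move=> vS; rewrite !ncompE -(cardsID (linked_to S v)) addnC -addSn.
by apply: leq_add; [apply: unlinked_roots_lt | apply: subset_leq_card; apply: linked_roots_sub].
Qed.

Lemma edgesP S E :
  reflect (exists u w, E = [set u; w] /\ adj S a u w) (E \in edges S a).
Proof.
rewrite inE; apply: (iffP existsP) => [[u /existsP[w /andP[/eqP-> uw]]]|[u [w [-> uw]]]].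
  by exists u, w.
by exists u; apply/existsP; exists w; rewrite eqxx.
Qed.

Lemma edges_del S v : v \in S ->
  edges S a = edges (S :\ v) a :|: [set [set v; u] | u in nbr S v].
Proof.
move=> vS; apply/setP=> E; apply/edgesP/setUP => [[u [w [-> uw]]]|].
  have [<-|uv] := eqVneq u v; first by right; apply/imsetP; exists w; rewrite ?inE.
  have [wv|wv] := eqVneq w v.
    by right; apply/imsetP; exists u; rewrite ?inE -wv 1?adj_sym // setUC.
  left; apply/edgesP; exists u, w; split=> //.
  by move: uw => /and3P[uS wS uw]; rewrite /adj !inE uv wv uS wS.
case=> [/edgesP[u [w [-> uw]]]|/imsetP[u vu ->]].
  by exists u, w; split=> //; apply: adj_subrel uw; apply: subD1set.
by exists v, u; rewrite inE in vu.
Qed.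

Lemma card_edges_del S v : v \in S ->
  #|edges S a| = #|edges (S :\ v) a| + #|nbr S v|.
Proof.
move=> vS; have vNnbr : v \notin nbr S v by rewrite inE adj_irr.
have set2_inj : {in nbr S v &, injective (fun u => [set v; u])}.
  move=> u1 u2 u1v _ eq12; have : u1 \in [set v; u2] by rewrite -eq12 !inE eqxx orbT.
  by rewrite !inE => /predU1P[u1_v|/eqP //]; move: u1v; rewrite u1_v (negbTE vNnbr).
have disj : edges (S :\ v) a :&: [set [set v; u] | u in nbr S v] = set0.
  apply/setP=> E; rewrite inE in_set0; apply/negP.
  case/andP=> /edgesP[u [w [-> /and3P[uSv wSv _]]]] /imsetP[z _ /setP/(_ v)].
  move: uSv wSv; rewrite !inE eqxx /= => /andP[uv _] /andP[wv _].
  by rewrite (eq_sym v u) (negbTE uv) (eq_sym v w) (negbTE wv).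
by rewrite (edges_del vS) cardsU disj cards0 subn0 (card_in_imset set2_inj).
Qed.

Lemma dim_cyc_del S v : v \in S ->
  (dim_cyc (S :\ v) a + #|nbr S v|%:Z - #|nbr_comps S v|%:Z <= dim_cyc S a)%R.
Proof.
move=> vS; have := ncomp_del vS; have := card_edges_del vS.
have := cardsD1_mem vS; rewrite /dim_cyc; lia.
Qed.

Lemma dim_cyc_del_le S v : v \in S -> (dim_cyc (S :\ v) a <= dim_cyc S a)%R.
Proof.
move=> vS; have := dim_cyc_del vS.
have := leq_imset_card (fingraph.root (adj (S :\ v) a)) (nbr S v); rewrite /nbr_comps; lia.
Qed.

Definition nbrs_linked S v u w :=
  [&& adj S a v u, adj S a v w, u != w & connect (adj (S :\ v) a) u w].

Lemma dim_cyc_del_lt S v u w : nbrs_linked S v u w -> (dim_cyc (S :\ v) a < dim_cyc S a)%R.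
Proof.
case/and4P=> vu vw uw u_w; have /and3P[vS _ _] := vu; have := dim_cyc_del vS.
suff : #|nbr_comps S v| + #|[set w]| <= #|nbr S v| by rewrite cards1; lia.
apply: card_imset_setD_le => [|_ /set1P->]; first by rewrite sub1set inE.
exists u; first by rewrite !inE uw.
by apply/esym/(fingraph.rootP (adj_connect_sym _)).
Qed.

Lemma dim_cyc_del_lt2 S v p q c d : nbrs_linked S v p q -> nbrs_linked S v c d ->
  c != p -> c != q -> (dim_cyc (S :\ v) a + 2 <= dim_cyc S a)%R.
Proof.
case/and4P=> vp vq pq p_q /and4P[vc vd cd c_d] cp cq.
have /and3P[vS _ _] := vp; have := dim_cyc_del vS.
suff : #|nbr_comps S v| + #|[set q; c]| <= #|nbr S v| by rewrite cards2 eq_sym cq; lia.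
have f_eq := fingraph.rootP (adj_connect_sym (S :\ v)).
have pND : p \in nbr S v :\: [set q; c] by rewrite !inE negb_or pq eq_sym cp vp.
apply: card_imset_setD_le => [|_ /set2P[]->].
- by apply/subsetP=> _ /set2P[]->; rewrite inE.
- by exists p => //; apply/esym/f_eq.
have [dq|dq] := eqVneq d q.
  by exists p => //; rewrite (f_eq _ _ c_d) dq; apply/esym/f_eq.
by exists d; [rewrite !inE negb_or dq /= eq_sym cd vd | apply/f_eq].
Qed.

Lemma cycle_nbrs_linked S p z : is_cycle S a p -> z \in p ->
  nbrs_linked S z (next p z) (prev p z).
Proof.
case/and3P=> up size_p cycle_p zp.
rewrite /nbrs_linked (next_cycle cycle_p zp) adj_sym (prev_cycle cycle_p zp) /=.
have [i r rot_p] := rot_to zp; rewrite -(next_rot i up) -(prev_rot i up) rot_p.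
have uzr : uniq (z :: r) by rewrite -rot_p rot_uniq.
have : cycle (adj S a) (z :: r) by rewrite -rot_p rot_cycle.
have : 2 <= size r by move: size_p; rewrite -(size_rot i) rot_p.
case: r {rot_p} uzr => [|u r] // uzr; case/lastP: r uzr => [|r w] // uzr _.
have -> : next (z :: u :: rcons r w) z = u by rewrite /= eqxx.
have -> : prev (z :: u :: rcons r w) z = w.
  rewrite prev_nth mem_head memNindex; last by case/andP: uzr.
  by rewrite -[size _]/((size (z :: u :: rcons r w)).-1) nth_last /= last_rcons.
rewrite /cycle rcons_cons /= rcons_path => /andP[_ /andP[uw_path _]].
apply/andP; split.
  case/andP: uzr => _ /andP[uNrw _]; apply: contraNneq uNrw => ->.
  by rewrite mem_rcons mem_head.
apply/connectP; exists (rcons r w); last by rewrite last_rcons.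
by apply: path_setD1 => //; case/andP: uzr.
Qed.

Lemma maximal_path S v : v \in S -> exists v0 t,
  [/\ v0 \in S, path (adj S a) v0 t, uniq (v0 :: t) & {subset nbr S v0 <= t}].
Proof.
move=> vS; pose P k := [exists v0, exists t : k.-tuple T,
  [&& v0 \in S, path (adj S a) v0 t & uniq (v0 :: t)]].
have P0 : P 0 by apply/existsP; exists v; apply/existsP; exists [tuple]; rewrite vS.
have P_bound k : P k -> k <= #|T|.
  case/existsP=> v0 /existsP[t /and3P[_ _ /card_uniqP size_v0t]].
  by have := max_card (mem (v0 :: t)); rewrite size_v0t /= size_tuple; apply: ltnW.
have [k /existsP[v0 /existsP[t /and3P[v0S v0t uv0t]]] k_max] := ex_maxnP (ex_intro _ 0 P0) P_bound.
exists v0, t; split=> // w; rewrite inE => v0w; apply/negPn/negP => wNt.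
suff /k_max : P k.+1 by rewrite ltnn.
apply/existsP; exists w; apply/existsP; exists [tuple of v0 :: t]; have /and3P[_ wS _] := v0w.
rewrite wS [path _ w _]/= cons_uniq adj_sym v0w v0t uv0t in_cons negb_or wNt !andbT.
by apply/eqP=> wv0; move: v0w; rewrite wv0 (negbTE (adj_irr S v0)).
Qed.

Lemma exists_leaf S : S != set0 -> (forall v u w, ~~ nbrs_linked S v u w) ->
  exists2 v, v \in S & {in nbr S v &, forall u w, u = w}.
Proof.
move=> /set0Pn[v /maximal_path[v0 [t [v0S v0t uv0t nbr_t]]]] acyclic.
case: t v0t uv0t nbr_t => [_ _ nbr_t|x t /andP[v0x xt] /andP[v0Nxt _] nbr_t].
  by exists v0 => // u w /nbr_t.
suff nbr_x u : u \in nbr S v0 -> u = x by exists v0 => // u w /nbr_x -> /nbr_x ->.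
move=> v0u; have := nbr_t u v0u; rewrite inE => /predU1P[//|ut].
apply/eqP/negPn/negP => ux; move/negP: (acyclic v0 x u); apply.
rewrite inE in v0u; rewrite /nbrs_linked v0x v0u eq_sym ux /=.
by apply: (path_connect (path_setD1 xt v0Nxt)); rewrite inE ut orbT.
Qed.

Lemma pendant_pair_del S x y : adj S a x y -> (forall w, adj S a y w -> w = x) ->
  [/\ sr (S :\ x :\ y) a + 2 <= sr S a, alpha (S :\ x :\ y) a < alpha S a,
      (dim_cyc (S :\ x :\ y) a <= dim_cyc (S :\ x) a)%R & #|S| = #|S :\ x :\ y| + 2].
Proof.
move=> xy pendant; have /and3P[xS yS _] := xy.
have ySx : y \in S :\ x.
  by rewrite !inE yS andbT; apply/eqP=> e; move: xy; rewrite e (negbTE (adj_irr S x)).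
split; first exact: sr_pendant.
- apply: (alpha_add (y := y)) => [||w].
  + exact: subset_trans (subD1set _ _) (subD1set _ _).
  + by rewrite !inE eqxx.
  by rewrite !inE => /and3P[_ wx _]; apply: contra wx => /pendant ->.
- exact: (dim_cyc_del_le ySx).
by rewrite (cardsD1_mem xS) (cardsD1_mem ySx) -addnA.
Qed.

Theorem sr_alpha_lower_bound S :
  (2 * #|S|%:Z - 2 * dim_cyc S a <= (sr S a)%:Z + 2 * (alpha S a)%:Z)%R.
Proof.
have [n] := ubnP #|S|; elim: n S => // n IHn S /ltnSE le_Sn.
have IH S' : #|S'| < #|S| ->
    (2 * #|S'|%:Z - 2 * dim_cyc S' a <= (sr S' a)%:Z + 2 * (alpha S' a)%:Z)%R.
  by move=> ?; apply: IHn; lia.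
have [/existsP[v /existsP[u /existsP[w vuw]]]|acyclic] :=
  boolP [exists v, exists u, exists w, nbrs_linked S v u w].
  have /and3P[/and3P[vS _ _] _ _] := vuw; have := dim_cyc_del_lt vuw.
  have := IH _ (proper_card (properD1 vS)); have := cardsD1_mem vS.
  have := sr_sub (subD1set S v); have := alpha_sub (subD1set S v); lia.
have [S0|S_neq0] := eqVneq S set0.
  by rewrite S0 /dim_cyc cards0; lia.
have [v0 v0S leaf] : exists2 v0, v0 \in S & {in nbr S v0 &, forall u w, u = w}.
  by apply: exists_leaf => // v u w; apply: contraNN acyclic => vuw; apply/existsP; exists v;
    apply/existsP; exists u; apply/existsP; exists w.
have [isolated|[x v0x]] := set_0Vmem (nbr S v0).
  have : alpha (S :\ v0) a < alpha S a.
    apply: (alpha_add (y := v0) (subD1set _ _)) => [|w _]; first by rewrite !inE eqxx.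
    by apply/negP=> v0w; move/setP/(_ w): isolated; rewrite !inE v0w.
  have := IH _ (proper_card (properD1 v0S)); have := cardsD1_mem v0S.
  have := sr_sub (subD1set S v0); have := dim_cyc_del_le v0S; lia.
rewrite inE adj_sym in v0x.
have pendant w : adj S a v0 w -> w = x by move=> v0w; apply: leaf; rewrite inE // adj_sym.
have [sr_lt alpha_lt dim_le card_S] := pendant_pair_del v0x pendant.
have /IH : #|S :\ x :\ v0| < #|S| by lia.
have /and3P[xS _ _] := v0x; have := dim_cyc_del_le xS; lia.
Qed.

Lemma lower_optimal_del S v : lower_optimal S a -> v \in S ->
  (dim_cyc (S :\ v) a < dim_cyc S a)%R ->
  [/\ sr S a = sr (S :\ v) a, alpha S a = alpha (S :\ v) a,
      dim_cyc S a = (dim_cyc (S :\ v) a + 1)%R & lower_optimal (S :\ v) a].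
Proof.
rewrite /lower_optimal => opt vS dim_lt; have := sr_alpha_lower_bound (S :\ v).
have := sr_sub (subD1set S v); have := alpha_sub (subD1set S v).
have := cardsD1_mem vS; move: dim_lt opt; set d := dim_cyc S a; set d' := dim_cyc (S :\ v) a.
by split; lia.
Qed.

Lemma cycle_dim_cyc_del S p z : is_cycle S a p -> z \in p ->
  z \in S /\ (dim_cyc (S :\ z) a < dim_cyc S a)%R.
Proof.
move=> p_cycle zp; have linked := cycle_nbrs_linked p_cycle zp.
by have /and3P[/and3P[]] := linked; split=> //; apply: dim_cyc_del_lt linked.
Qed.

Lemma lower_optimal_cycle_edges S p q x : lower_optimal S a ->
  is_cycle S a p -> is_cycle S a q -> x \in p -> x \in q ->
  cycle_edges q \subset cycle_edges p.
Proof.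
move=> opt p_cycle q_cycle xp xq; have /and3P[up _ _] := p_cycle; have /and3P[uq _ _] := q_cycle.
apply: (cycle_edges_sub uq xp xq) => z zq zp; apply/negPn/negP => zq_off.
have [zS /(lower_optimal_del opt zS)[_ _ dim_eq _]] := cycle_dim_cyc_del p_cycle zp.
have off_p w : [set z; w] \notin cycle_edges p -> w != next p z /\ w != prev p z.
  move=> zw_off; split; apply: contraNneq zw_off => ->; apply/imsetP.
    by exists z.
  by exists (prev p z); rewrite ?mem_prev // (next_prev up) setUC.
have [nq_np nq_pp] := off_p _ zq_off.
have := dim_cyc_del_lt2 (cycle_nbrs_linked p_cycle zp) (cycle_nbrs_linked q_cycle zq) nq_np nq_pp.
by rewrite dim_eq; lia.
Qed.

Lemma pendant_nbr S y x : pendant S a y -> adj S a y x -> forall w, adj S a y w -> w = x.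
Proof.
case/andP=> _ /cards1P[u nbr_y] yx w yw.
have : w \in [set u] by rewrite -nbr_y inE.
have : x \in [set u] by rewrite -nbr_y inE.
by rewrite !inE => /eqP -> /eqP ->.
Qed.

Lemma lower_optimal_not_quasi_pendant S x : lower_optimal S a -> x \in S ->
  (dim_cyc (S :\ x) a < dim_cyc S a)%R -> ~~ quasi_pendant S a x.
Proof.
move=> opt xS dim_lt; have [_ _ dim_eq _] := lower_optimal_del opt xS dim_lt.
apply/negP=> /andP[_ /existsP[y /andP[xy y_pendant]]].
have yx : adj S a y x by rewrite adj_sym.
have [sr_lt alpha_lt dim_le card_S] := pendant_pair_del xy (pendant_nbr y_pendant yx).
have := sr_alpha_lower_bound (S :\ x :\ y); move: opt; rewrite /lower_optimal; lia.
Qed.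

End OrientedGraph.

Unset Implicit Arguments.

Theorem lemma2p2 (T : finType) (V : {set T}) (a : rel T) (x : T) :
  oriented a -> lower_optimal V a -> x \in V -> on_cycle V a x ->
  [/\ sr V a = sr (V :\ x) a,
      alpha V a = alpha (V :\ x) a,
      dim_cyc V a = (dim_cyc (V :\ x) a + 1)%R,
      lower_optimal (V :\ x) a
    & on_unique_cycle V a x /\ ~~ quasi_pendant V a x].
Proof.
move=> a_oriented opt xV [p [p_cycle xp]].
have [_ dim_lt] := cycle_dim_cyc_del a_oriented p_cycle xp.
have [sr_eq alpha_eq dim_eq opt_x] := lower_optimal_del a_oriented opt xV dim_lt.
split=> //; split; last exact: (lower_optimal_not_quasi_pendant a_oriented opt xV dim_lt).
split=> [|p' q' p'_cycle xp' q'_cycle xq']; first by exists p.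
apply/eqP; rewrite eqEsubset.
by rewrite (lower_optimal_cycle_edges a_oriented opt p'_cycle q'_cycle xp' xq')
  (lower_optimal_cycle_edges a_oriented opt q'_cycle p'_cycle xq' xp').
Qed.
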